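(* Let $k\ge 2$ be an integer. For $n\ge 1$ let \[E_{n,k}=\frac{1}{k^n}\sum_{i=1}^n i\cdot \mathrm{IB}_k(n,i),\] the expected width of the largest BP-factorization of a uniformly random length-$n$ word over $\Sigma_k$, where $\mathrm{IB}_k(n,i)$ is the number of length-$n$ words over $\Sigma_k$ whose largest BP-factorization has width $i$. Then the limit $E_k=\lim_{n\to\infty}E_{n,k}$ exists.
   Context: $\Sigma_k=\{0,1,\ldots,k-1\}$. A block palindrome factorization (BP-factorization) of a word $w$ is a factorization $w=w_m\cdots w_1w_0w_1\cdots w_m$ with $m\ge 0$, $w_0$ a possibly empty word and $w_1,\dots,w_m$ non-empty words. Its width is $2m+1$ if $w_0$ is non-empty and $2m$ if $w_0$ is empty. A largest BP-factorization of $w$ is a BP-factorization of $w$ of maximum width. *)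

From HB Require Import structures.
From mathcomp Require Import all_boot all_order all_algebra.
From mathcomp Require Import all_classical all_reals all_analysis.
Set Implicit Arguments. Unset Strict Implicit. Unset Printing Implicit Defensive.
Import Order.TTheory GRing.Theory Num.Theory.

(* Words over Sigma_k = {0,...,k-1} are sequences of 'I_k. *)

(* A BP-factorization w = w_m ... w_1 w_0 w_1 ... w_m, represented by
   ws = [:: w_1; ...; w_m] (all non-empty) and the (possibly empty) centre w0. *)
Definition is_BPfact {T : eqType} (w : seq T) (ws : seq (seq T)) (w0 : seq T) : Prop :=
  all (fun u => u != [::]) ws /\ w = flatten (rev ws) ++ w0 ++ flatten ws.

Definition BPwidth {T : Type} (ws : seq (seq T)) (w0 : seq T) : nat :=
  (size ws).*2 + (if w0 is [::] then 0 else 1).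

Definition largest_BP_width {T : eqType} (w : seq T) (i : nat) : Prop :=
  (exists ws w0, is_BPfact w ws w0 /\ BPwidth ws w0 = i) /\
  (forall ws w0, is_BPfact w ws w0 -> BPwidth ws w0 <= i).

Definition IB (k n i : nat) : nat :=
  #|[set w : n.-tuple 'I_k | `[< largest_BP_width (tval w) i >]]|.

Local Open Scope ring_scope.
Definition E_nk {R : realType} (k n : nat) : R :=
  ((k ^ n)%:R)^-1 * \sum_(1 <= i < n.+1) (i%:R * (IB k n i)%:R).

(* The largest BP-factorization is found greedily: peel off the shortest border
   u of w = u m u (with 2|u| <= |w|) and recurse on m.  This is optimal because
   if w = v m v with v longer than the shortest border u, then |u| <= |v|/2
   (otherwise 2|u| - |v| would be a shorter border), so v = u y u and the
   factorization through v refines to one through u, y, u m u, y.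
   The words of length n whose shortest border has length a are exactly the
   words u m u with u unbordered of length a, so the mean width E_n satisfies
   the renewal equation E_n = 1 + sum_(a <= n/2) p_a (1 + E_(n-2a)), where
   p_a = B_a / k^(2a) and B_a counts unbordered words of length a.  Since
   p_a <= k^-a and B_(a+1) <= (k-1) k^a, the p_a sum to at most 3/4 and decay
   geometrically; hence E_n is bounded and the oscillation of E beyond index
   T + 2N + 1 is at most 3/4 of that beyond T plus O(2^-N), so E_n is Cauchy. *)

From HB Require Import structures.
From mathcomp Require Import all_boot all_order all_algebra.
From mathcomp Require Import all_classical all_reals all_analysis.
From mathcomp Require Import zify ring lra.
Import Order.TTheory GRing.Theory Num.Theory.
Import numFieldNormedType.Exports.
Set Implicit Arguments. Unset Strict Implicit. Unset Printing Implicit Defensive.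

Section Borders.
Variable T : eqType.
Implicit Types (u v w z m : seq T) (a b c : nat).

Definition border a w : bool :=
  [&& 0 < a, a.*2 <= size w & take a w == drop (size w - a) w].

Definition strip a w : seq T := drop a (take (size w - a) w).

Definition min_border w : nat :=
  let s := iota 1 (size w) in
  if has (border^~ w) s then (find (border^~ w) s).+1 else 0.

Lemma border_range a w : border a w -> 0 < a /\ a.*2 <= size w.
Proof. by case/and3P. Qed.

Lemma borderP x0 a w :
  reflect [/\ 0 < a, a.*2 <= size w &
             forall i, i < a -> nth x0 w i = nth x0 w (size w - a + i)]
          (border a w).
Proof.
apply: (iffP and3P) => -[a_gt0 a_le eq_aw]; split=> //.
  by move=> i lt_ia; rewrite -(nth_take _ lt_ia) (eqP eq_aw) nth_drop.
apply/eqP/(eq_from_nth (x0 := x0)) => [|i].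
  by rewrite size_take size_drop; case: ifP; lia.
by rewrite size_take; case: ifP => lt_a lt_i; [rewrite nth_take // nth_drop eq_aw | lia].
Qed.

Variant min_border_spec w : nat -> Prop :=
| MinBorderNone of (forall c, ~~ border c w) : min_border_spec w 0
| MinBorderSome a of border a w & (forall c, c < a -> ~~ border c w) :
    min_border_spec w a.

Lemma min_borderP w : min_border_spec w (min_border w).
Proof.
rewrite /min_border; set s := iota 1 (size w).
have nth_s i : i < size w -> nth 0 s i = i.+1 by move=> ?; rewrite nth_iota.
case: ifPn => [has_s | /hasPn no_border].
  have : find (border^~ w) s < size s by rewrite -has_find.
  rewrite size_iota => lt_find.
  constructor; first by rewrite -nth_s //; exact: (nth_find 0 has_s).
  case=> [|c] lt_c //; rewrite -nth_s; last lia.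
  by move: lt_c; rewrite ltnS => /(before_find 0) ->.
constructor=> c; apply/negP => bc; have [c_gt0 c_le] := border_range bc.
have c_in : c \in s by rewrite mem_iota; lia.
by move: (no_border c c_in); rewrite bc.
Qed.

Lemma min_border_le a w : border a w -> 0 < min_border w <= a.
Proof.
case: min_borderP => [/(_ a)/negP // | b /border_range[b_gt0 _] b_min ba].
by rewrite b_gt0 leqNgt; apply/negP => /b_min; rewrite ba.
Qed.

Lemma size_strip a w : size (strip a w) = size w - a.*2.
Proof. by rewrite /strip size_drop size_take; case: ifP; lia. Qed.

Lemma border_split a w : border a w -> w = take a w ++ strip a w ++ take a w.
Proof.
case/and3P => _ a_le /eqP eq_aw; rewrite {2}eq_aw /strip catA.
have -> : take a w = take a (take (size w - a) w) by rewrite take_takel //; lia.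
by rewrite !cat_take_drop.
Qed.

Lemma strip_cat u m z : size z = size u -> strip (size u) (u ++ m ++ z) = m.
Proof.
move=> eq_zu; rewrite /strip !size_cat catA take_size_cat; last by rewrite size_cat; lia.
by rewrite drop_size_cat.
Qed.

Lemma border_cat c u m z : size z = size u -> c <= size u ->
  border c (u ++ m ++ z) = (0 < c) && (take c u == drop (size u - c) z).
Proof.
move=> eq_zu le_c; rewrite /border takel_cat // catA drop_cat !size_cat ifN; last lia.
have -> : size u + size m + size z - c - (size u + size m) = size u - c by lia.
by have -> : c.*2 <= size u + size m + size z by lia.
Qed.

Lemma border_overlap a b w :
  border a w -> border b w -> a < b < a.*2 -> border (a.*2 - b) w.
Proof.
case: w => [|x0 w0]; first by case/border_range; case: a.
set w := x0 :: w0 => /(borderP x0)[a_gt0 a_le bord_a] /(borderP x0)[b_gt0 b_le bord_b].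
move=> /andP[lt_ab lt_ba]; apply/(borderP x0); split; [lia | lia | move=> i lt_i].
rewrite bord_a; last lia.
have -> : size w - a + i = size w - b + (b - a + i) by lia.
rewrite -bord_b; last lia.
by rewrite bord_a; [congr nth | ]; lia.
Qed.

Fixpoint greedy_width_rec n w : nat :=
  if n is n'.+1 then
    if w is [::] then 0
    else if min_border w == 0 then 1
    else (greedy_width_rec n' (strip (min_border w) w)).+2
  else 0.

Definition greedy_width w : nat := greedy_width_rec (size w) w.

Lemma greedy_width_rec_fuel n1 n2 w : size w <= n1 -> size w <= n2 ->
  greedy_width_rec n1 w = greedy_width_rec n2 w.
Proof.
elim: n1 n2 w => [|n1 IH] [|n2] [|x w] //= le1 le2.
case: min_borderP => // a /border_range[a_gt0 _] _.
by rewrite (IH n2) // size_strip /=; lia.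
Qed.

Lemma greedy_widthE w : greedy_width w =
  if w is [::] then 0 else if min_border w == 0 then 1
  else (greedy_width (strip (min_border w) w)).+2.
Proof.
case: w => [|x w] //; rewrite /greedy_width /=.
case: min_borderP => // a /border_range[a_gt0 _] _.
rewrite (greedy_width_rec_fuel (n2 := size (strip a (x :: w)))) //.
by rewrite size_strip /=; lia.
Qed.

Lemma greedy_width_strip w : 0 < min_border w ->
  greedy_width w = (greedy_width (strip (min_border w) w)).+2.
Proof. by case: w => // x w pos; rewrite greedy_widthE gtn_eqF. Qed.

Lemma greedy_width_le_size w : greedy_width w <= size w.
Proof.
have [n] := ubnP (size w); elim: n w => // n IH w /ltnSE le_w.
rewrite greedy_widthE; case: w le_w => //= x w le_w.
case: min_borderP => // a ba _; move: (border_range ba) => /= [a_gt0 a_le].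
have lt_s : size (strip a (x :: w)) < n by rewrite size_strip /=; lia.
by have := IH _ lt_s; rewrite gtn_eqF // size_strip /=; lia.
Qed.

Lemma is_BPfact_wrap m ws w0 u : is_BPfact m ws w0 -> u != [::] ->
  is_BPfact (u ++ m ++ u) (rcons ws u) w0.
Proof.
case=> ws_nil -> u_nil; split; first by rewrite all_rcons u_nil.
by rewrite rev_rcons flatten_rcons /= -!catA.
Qed.

Lemma BPwidth_rcons (ws : seq (seq T)) u w0 :
  BPwidth (rcons ws u) w0 = (BPwidth ws w0).+2.
Proof. by rewrite /BPwidth size_rcons doubleS. Qed.

Lemma greedy_width_BPfact w :
  exists ws w0, is_BPfact w ws w0 /\ BPwidth ws w0 = greedy_width w.
Proof.
have [n] := ubnP (size w); elim: n w => // n IH w /ltnSE le_w.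
rewrite greedy_widthE; case: w le_w => [|x w] /= le_w; first by exists [::], [::].
case: min_borderP => [_ | a ba _].
  by exists [::], (x :: w); split=> //; split=> //=; rewrite cats0.
move: (border_range ba) => /= [a_gt0 a_le].
have [|ws [w0 [fact_s <-]]] := IH (strip a (x :: w)); first by rewrite size_strip /=; lia.
exists (rcons ws (take a (x :: w))), w0; rewrite BPwidth_rcons gtn_eqF //; split=> //.
rewrite {1}(border_split ba); apply: is_BPfact_wrap => //.
by rewrite -size_eq0 size_take /=; case: ifP; lia.
Qed.

Lemma border_BPfact w ws v w0 : is_BPfact w (rcons ws v) w0 -> border (size v) w.
Proof.
case; rewrite all_rcons rev_rcons flatten_rcons => /andP[v_nil _] /= ->.
rewrite -catA; set m := flatten (rev ws) ++ w0 ++ flatten ws.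
have -> : v ++ flatten (rev ws) ++ w0 ++ flatten ws ++ v = v ++ m ++ v by rewrite /m -!catA.
rewrite border_cat //.
by rewrite subnn drop0 take_size lt0n size_eq0 v_nil eqxx.
Qed.

Lemma strip_min_border_BPfact w ws v w0 : is_BPfact w (rcons ws v) w0 ->
  exists ws' w0',
    is_BPfact (strip (min_border w) w) ws' w0' /\ BPwidth ws w0 <= BPwidth ws' w0'.
Proof.
move=> fact_w; have bv := border_BPfact fact_w.
case: fact_w; rewrite all_rcons rev_rcons flatten_rcons => /andP[v_nil all_ws] /= eq_w.
set m := flatten (rev ws) ++ w0 ++ flatten ws.
have fact_m : is_BPfact m ws w0 by [].
have {}eq_w : w = v ++ m ++ v by rewrite eq_w /m -!catA.
subst w; case: min_borderP (min_border_le bv) => // a ba a_min /andP[a_gt0 a_le].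
have [-> | ne_a] := eqVneq a (size v); first by exists ws, w0; rewrite strip_cat.
have lt_a : a < size v by rewrite ltn_neqAle ne_a.
have a2_le : a.*2 <= size v.
  rewrite leqNgt; apply/negP => lt_v.
  have := border_overlap ba bv; rewrite lt_a lt_v => /(_ isT).
  by apply/negP/a_min; lia.
have bav : border a v.
  by move: ba; rewrite (border_cat m (erefl (size v)) (ltnW lt_a)) /border a2_le.
set u := take a v; set y := strip a v.
have size_u : size u = a by rewrite size_takel // ltnW.
have u_nil : u != [::] by rewrite -size_eq0 size_u -lt0n.
have -> : strip a (v ++ m ++ v) = y ++ (u ++ m ++ u) ++ y.
  have -> : v ++ m ++ v = u ++ (y ++ (u ++ m ++ u) ++ y) ++ u.
    by rewrite {1 2}(border_split bav) -!catA.
  by rewrite -{1}size_u strip_cat.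
have fact_umu := is_BPfact_wrap fact_m u_nil.
have [-> | y_nil] := eqVneq y [::].
  by exists (rcons ws u), w0; rewrite cat0s cats0 BPwidth_rcons; split=> //; lia.
exists (rcons (rcons ws u) y), w0; rewrite !BPwidth_rcons.
by split; [exact: is_BPfact_wrap | lia].
Qed.

Lemma BPwidth_le_greedy_width w ws w0 :
  is_BPfact w ws w0 -> BPwidth ws w0 <= greedy_width w.
Proof.
have [n] := ubnP (size w); elim: n w ws w0 => // n IH w ws w0 /ltnSE le_w.
case/lastP: ws => [|ws v] fact_w.
  case: fact_w => _ ->; rewrite /= cats0 greedy_widthE.
  by case: w0 => // x w0; case: (_ == 0).
have bv := border_BPfact fact_w; have [_ v_le] := border_range bv.
have /andP[mb_gt0 mb_le] := min_border_le bv.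
have [ws' [w0' [fact_s le_width]]] := strip_min_border_BPfact fact_w.
have lt_s : size (strip (min_border w) w) < n by rewrite size_strip; lia.
rewrite greedy_width_strip // BPwidth_rcons !ltnS.
exact: leq_trans le_width (IH _ _ _ lt_s fact_s).
Qed.

Lemma largest_BP_widthE w i : largest_BP_width w i <-> greedy_width w = i.
Proof.
split=> [[[ws [w0 [fact_w <-]]] max_w] | <-].
  apply/eqP; rewrite eqn_leq (BPwidth_le_greedy_width fact_w) andbT.
  by have [ws' [w0' [fact' <-]]] := greedy_width_BPfact w; apply: max_w.
by split; [exact: greedy_width_BPfact | move=> ws w0; exact: BPwidth_le_greedy_width].
Qed.

(* Unlike [border], overlapping borders (of length up to [size u - 1]) count here. *)
Definition unbordered u : bool :=
  all (fun c => take c u != drop (size u - c) u) (iota 1 (size u).-1).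

Lemma min_border_eq a w : 0 < a ->
  (min_border w == a) = border a w && all (fun c => ~~ border c w) (iota 0 a).
Proof.
move=> a_gt0; case: min_borderP => [no_border | b bb b_min].
  by rewrite (negbTE (no_border a)) eq_sym gtn_eqF.
have [<- | ne_ba] := eqVneq b a.
  by rewrite bb; symmetry; apply/allP => c; rewrite mem_iota => /b_min.
symmetry; apply/negbTE/andP => -[ba /allP no_smaller].
case: (ltngtP b a) => [lt_ba | lt_ab | eq_ba]; last by rewrite eq_ba eqxx in ne_ba.
  by move: (no_smaller b); rewrite mem_iota lt_ba bb => /(_ isT).
by move: (b_min a lt_ab); rewrite ba.
Qed.

Lemma min_border_cat u m z : size z = size u -> 0 < size u ->
  (min_border (u ++ m ++ z) == size u) = (z == u) && unbordered u.
Proof.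
move=> eq_zu u_gt0; rewrite min_border_eq // border_cat // subnn drop0 take_size u_gt0.
rewrite eq_sym; case: eqP => [-> | _] //=.
have -> : iota 0 (size u) = 0 :: iota 1 (size u).-1 by case: (size u) u_gt0.
rewrite /unbordered /=; apply: eq_in_all => c; rewrite mem_iota => /andP[c_gt0 lt_c].
by rewrite border_cat // ?c_gt0 //; lia.
Qed.

Lemma unbordered_cons_last x w : w != [::] -> unbordered (x :: w) -> x != last x w.
Proof.
have drop_last s y : drop (size s) (y :: s) = [:: last y s].
  by elim: s y => [|z s IH] y //=; rewrite IH.
case: w => // y w _; rewrite /unbordered /= => /andP[+ _].
by rewrite drop_last; apply: contraNneq => ->.
Qed.

Lemma greedy_width_sum w : 0 < size w -> greedy_width w =
  1 + \sum_(1 <= a < (size w)./2.+1) (min_border w == a) * (1 + greedy_width (strip a w)).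
Proof.
rewrite greedy_widthE; case: w => // x w _.
case: min_borderP => [_ | a ba _].
  rewrite big1_seq // => a /andP[_]; rewrite mem_index_iota => /andP[a_gt0 _].
  by case: a a_gt0.
move: (border_range ba) => /= [a_gt0 a_le].
rewrite gtn_eqF // (bigD1_seq a) ?iota_uniq ?mem_index_iota //=; last lia.
rewrite eqxx mul1n big1 ?addn0 ?add1n // => b /negbTE.
by rewrite eq_sym => ->.
Qed.

End Borders.

Lemma sum_count (T : Type) (s : seq T) (P : pred T) : \sum_(x <- s) P x = count P s.
Proof. by rewrite -sum1_count [RHS]big_mkcond; apply: eq_bigr => x _; case: (P x). Qed.

Section Counting.
Variable k : nat.
Implicit Types (u w z m : seq 'I_k) (a n : nat).

Fixpoint words n : seq (seq 'I_k) :=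
  if n is n'.+1 then [seq c :: w | c <- enum 'I_k, w <- words n'] else [:: [::]].

Lemma mem_words n w : (w \in words n) = (size w == n).
Proof.
elim: n w => [|n IH] [|c w] //=; first by apply/allpairsP => -[[c' w'] /= [_ _]].
apply/allpairsP/idP => [[[c' w'] /= [_ w'_n [_ ->]]] | w_n]; first by rewrite eqSS -IH.
by exists (c, w); rewrite mem_enum IH -eqSS.
Qed.

Lemma words_uniq n : uniq (words n).
Proof.
elim: n => [|n IH] //=; apply: allpairs_uniq => //; first exact: enum_uniq.
by move=> [c w] [c' w'] _ _ /= [-> ->].
Qed.

Lemma size_words n : size (words n) = k ^ n.
Proof. by elim: n => [|n IH] //=; rewrite size_allpairs size_enum_ord IH expnS. Qed.

Lemma big_words_cons n (F : seq 'I_k -> nat) :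
  \sum_(w <- words n.+1) F w = \sum_(c <- enum 'I_k) \sum_(w <- words n) F (c :: w).
Proof. exact: big_allpairs_dep. Qed.

Lemma big_words_cat p q (F : seq 'I_k -> nat) :
  \sum_(w <- words (p + q)) F w = \sum_(x <- words p) \sum_(y <- words q) F (x ++ y).
Proof.
elim: p F => [|p IH] F; first by rewrite big_seq1.
by rewrite addSn !big_words_cons; apply: eq_bigr => c _; rewrite IH.
Qed.

Definition n_unbordered a : nat := count (@unbordered 'I_k) (words a).

Lemma sum_min_border n a (f : seq 'I_k -> nat) : 0 < a -> a.*2 <= n ->
  \sum_(w <- words n) (min_border w == a) * f (strip a w) =
  n_unbordered a * \sum_(m <- words (n - a.*2)) f m.
Proof.
move=> a_gt0 a_le; rewrite {1}(_ : n = a + (n - a.*2 + a)); last lia.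
rewrite big_words_cat /n_unbordered -sum_count big_distrl [RHS]big_seq [LHS]big_seq /=.
apply: eq_bigr => u; rewrite mem_words => /eqP size_u.
rewrite big_words_cat big_distrr /=; apply: eq_bigr => m _.
transitivity (\sum_(z <- words a) (z == u) * (unbordered u * f m)).
  rewrite !big_seq; apply: eq_bigr => z; rewrite mem_words => /eqP size_z.
  rewrite -size_u min_border_cat ?strip_cat ?size_z ?size_u //.
  by rewrite mulnA mulnb.
rewrite (bigD1_seq u) ?words_uniq ?mem_words ?size_u //= eqxx mul1n.
by rewrite big1 ?addn0 // => z /negbTE ->.
Qed.

Definition total_width n : nat := \sum_(w <- words n) greedy_width w.

Lemma total_width_rec n : 0 < n -> total_width n =
  k ^ n + \sum_(1 <= a < n./2.+1) n_unbordered a * (k ^ (n - a.*2) + total_width (n - a.*2)).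
Proof.
move=> n_gt0; rewrite /total_width (eq_big_seq (fun w =>
  1 + \sum_(1 <= a < n./2.+1) (min_border w == a) * (1 + greedy_width (strip a w)))).
  rewrite big_split /= sum1_size size_words exchange_big /=; congr (_ + _).
  apply: eq_big_nat => a /andP[a_gt0 a_le]; have a2_le : a.*2 <= n by lia.
  rewrite (@sum_min_border n a (fun m => 1 + greedy_width m)) //.
  by rewrite big_split /= sum1_size size_words.
by move=> w; rewrite mem_words => /eqP size_w; rewrite greedy_width_sum size_w.
Qed.

Lemma n_unbordered_le a : n_unbordered a <= k ^ a.
Proof. by rewrite -size_words count_size. Qed.

Lemma count_predC1_ord (x : 'I_k) : count (predC1 x) (enum 'I_k) = k.-1.
Proof.
rewrite -[in RHS](size_enum_ord k) -(count_predC (pred1 x)).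
by rewrite count_uniq_mem ?enum_uniq // mem_enum add1n.
Qed.

Lemma n_unbordered_succ_le a : 0 < a -> n_unbordered a.+1 <= k.-1 * k ^ a.
Proof.
move=> a_gt0; rewrite /n_unbordered -sum_count big_words_cons.
apply: (@leq_trans (\sum_(c <- enum 'I_k) \sum_(w <- words a) (c != last c w))).
  apply: leq_sum => c _; rewrite !big_seq; apply: leq_sum => w.
  rewrite mem_words => /eqP size_w; case ub: (unbordered (c :: w)) => //.
  by rewrite lt0b unbordered_cons_last // -size_eq0 size_w -lt0n.
rewrite exchange_big /= -size_words -sum1_size big_distrr /= muln1 !big_seq.
apply: leq_sum => -[|y w]; rewrite mem_words => /eqP size_w; first by rewrite -size_w in a_gt0.
by rewrite sum_count /= count_predC1_ord.
Qed.

End Counting.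

Local Open Scope ring_scope.

Lemma sum_inv2_tail (R : realFieldType) N M : \sum_(N.+1 <= a < M) 2 ^- a <= 2 ^- N :> R.
Proof.
have exact_sum j : \sum_(N.+1 <= a < N.+1 + j) 2 ^- a = 2 ^- N - 2 ^- (N + j) :> R.
  elim: j => [|j IH]; first by rewrite !addn0 big_geq // subrr.
  rewrite addnS big_nat_recr ?leq_addr //= IH addSn addnS exprS invfM; lra.
have inv_ge0 i : 0 <= 2 ^- i :> R by rewrite invr_ge0 exprn_ge0.
case: (leqP M N.+1) => [le_M | lt_M]; first by rewrite big_geq.
by rewrite -(subnKC (ltnW lt_M)) exact_sum lerBlDr lerDl.
Qed.

Section Renewal.
Variable R : realType.
Variables (e p : nat -> R).
Hypothesis p_ge0 : forall a, 0 <= p a.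
Hypothesis p_le : forall a, p a <= 2 ^- a.
Hypothesis p_sum_le : forall M, \sum_(1 <= a < M) p a <= 3 / 4.
Hypothesis e0 : e 0 = 0.
Hypothesis e_rec : forall n, (0 < n)%N ->
  e n = 1 + \sum_(1 <= a < n./2.+1) p a * (1 + e (n - a.*2)).

(* 7 = 1 + 8 * 3/4 *)
Lemma renewal_bounded n : 0 <= e n <= 7.
Proof.
elim/ltn_ind: n => n IH; case: (posnP n) => [-> | n_gt0].
  by rewrite e0 lexx /=; lra.
have term_bnd a : (1 <= a < n./2.+1)%N -> 0 <= p a * (1 + e (n - a.*2)) <= 8 * p a.
  move=> /andP[a_gt0 a_le]; have /andP[e_ge0 e_le] := IH (n - a.*2)%N ltac:(lia).
  have := p_ge0 a => p_a_ge0.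
  by apply/andP; split; [apply: mulr_ge0; lra | rewrite mulrC ler_wpM2r //; lra].
have sum_ge0 : 0 <= \sum_(1 <= a < n./2.+1) p a * (1 + e (n - a.*2)).
  by rewrite big_nat; apply: sumr_ge0 => a /term_bnd /andP[].
have sum_le : \sum_(1 <= a < n./2.+1) p a * (1 + e (n - a.*2)) <=
              8 * \sum_(1 <= a < n./2.+1) p a.
  by rewrite mulr_sumr !big_nat; apply: ler_sum => a /term_bnd /andP[].
have := p_sum_le n./2.+1; rewrite e_rec // => sum_p; apply/andP; split; lra.
Qed.

Lemma renewal_tail n N :
  0 <= \sum_(N.+1 <= a < n./2.+1) p a * (1 + e (n - a.*2)) <= 8 * 2 ^- N.
Proof.
have term_bnd a : 0 <= p a * (1 + e (n - a.*2)) <= 8 * 2 ^- a.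
  have /andP[e_ge0 e_le] := renewal_bounded (n - a.*2).
  have := p_ge0 a; have := p_le a => p_a_le p_a_ge0.
  apply/andP; split; first by apply: mulr_ge0; lra.
  by rewrite mulrC; apply: ler_pM; lra.
apply/andP; split.
  by rewrite big_nat; apply: sumr_ge0 => a _; case/andP: (term_bnd a).
apply: le_trans (_ : 8 * \sum_(N.+1 <= a < n./2.+1) 2 ^- a <= _).
  by rewrite mulr_sumr !big_nat; apply: ler_sum => a _; case/andP: (term_bnd a).
by rewrite ler_pM2l ?sum_inv2_tail //; lra.
Qed.

Lemma renewal_contract T (d : R) N :
  (forall n m, (T <= n)%N -> (T <= m)%N -> `|e n - e m| <= d) ->
  forall n m, (T + N.*2.+1 <= n)%N -> (T + N.*2.+1 <= m)%N ->
  `|e n - e m| <= 3 / 4 * d + 8 * 2 ^- N.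
Proof.
move=> close_T n m le_n le_m.
have d_ge0 : 0 <= d by apply: le_trans (close_T T T _ _); rewrite ?subrr ?normr0.
have split_rec l : (T + N.*2.+1 <= l)%N -> e l = 1 +
    \sum_(1 <= a < N.+1) p a * (1 + e (l - a.*2)) +
    \sum_(N.+1 <= a < l./2.+1) p a * (1 + e (l - a.*2)).
  move=> le_l; rewrite e_rec; last lia.
  by rewrite [in LHS](big_cat_nat _ (n := N.+1)) ?addrA //; lia.
have head_close : `|\sum_(1 <= a < N.+1) p a * (1 + e (n - a.*2)) -
                    \sum_(1 <= a < N.+1) p a * (1 + e (m - a.*2))| <= 3 / 4 * d.
  rewrite -sumrB; apply: le_trans (ler_norm_sum _ _ _) _.
  apply: le_trans (_ : \sum_(1 <= a < N.+1) p a * d <= _); last first.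
    by rewrite -mulr_suml ler_wpM2r.
  rewrite !big_nat; apply: ler_sum => a /andP[a_gt0 a_le].
  rewrite -mulrBr normrM ger0_norm // ler_wpM2l // opprD addrACA subrr add0r.
  by apply: close_T; lia.
rewrite (split_rec n) // (split_rec m) //.
have := renewal_tail n N; have := renewal_tail m N; move: head_close.
set A := \sum_(1 <= a < N.+1) _; set B := \sum_(1 <= a < N.+1) _.
set tn := \sum_(N.+1 <= a < n./2.+1) _; set tm := \sum_(N.+1 <= a < m./2.+1) _.
rewrite !ler_norml => /andP[lo hi] /andP[tm_ge0 tm_le] /andP[tn_ge0 tn_le].
by apply/andP; split; lra.
Qed.

(* 32 = 8 / (1 - 3/4) *)
Lemma renewal_close j N n m :
  (j * N.*2.+1 <= n)%N -> (j * N.*2.+1 <= m)%N ->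
  `|e n - e m| <= 7 * (3 / 4) ^+ j + 32 * 2 ^- N.
Proof.
have inv_ge0 : 0 <= 2 ^- N :> R by rewrite invr_ge0 exprn_ge0.
elim: j n m => [|j IH] n m le_n le_m.
  have /andP[en_ge0 en_le] := renewal_bounded n.
  have /andP[em_ge0 em_le] := renewal_bounded m.
  by rewrite expr0 ler_norml; apply/andP; split; lra.
have le_n' : (j * N.*2.+1 + N.*2.+1 <= n)%N by rewrite addnC -mulSn.
have le_m' : (j * N.*2.+1 + N.*2.+1 <= m)%N by rewrite addnC -mulSn.
apply: le_trans (renewal_contract IH le_n' le_m') _.
by rewrite exprS; lra.
Qed.

Lemma renewal_cvg : cvgn e.
Proof.
apply/cauchy_cvgP/cauchy_exP => eps eps_gt0.
have lt34 : `|3 / 4 : R| < 1 by rewrite gtr0_norm; lra.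
have lt12 : `|2^-1 : R| < 1 by rewrite gtr0_norm; lra.
have eps14 : 0 < eps / 14 by lra.
have eps64 : 0 < eps / 64 by lra.
have [j _ small_j] := cvgr_lt 0 (cvg_expr lt34) (eps / 14) eps14.
have [N _ small_N] := cvgr_lt 0 (cvg_expr lt12) (eps / 64) eps64.
exists (e (j * N.*2.+1)%N), (j * N.*2.+1)%N => // n le_n.
apply: le_lt_trans (renewal_close (leqnn _) le_n) _.
have := small_j j (leqnn j); have := small_N N (leqnn N); rewrite /= exprVn.
lra.
Qed.

End Renewal.

Section MeanWidth.
Variable R : realType.
Variable k : nat.
Hypothesis k_gt1 : (1 < k)%N.
Local Notation K := (k%:R : R).

Definition mean_width n : R := (total_width k n)%:R / (k ^ n)%:R.
Definition unbordered_density a : R := (n_unbordered k a)%:R / (k ^ a.*2)%:R.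

Lemma K_gt0 : 0 < K. Proof. by rewrite ltr0n ltnW. Qed.

Lemma K_expr_neq0 i : K ^+ i != 0. Proof. by rewrite expf_neq0 // gt_eqF // K_gt0. Qed.

Lemma invK_expr_le a : K ^- a <= 2 ^- a.
Proof.
rewrite lef_pV2 ?posrE ?exprn_gt0 ?K_gt0 //.
by rewrite lerXn2r ?nnegrE ?ler_nat // ltW ?K_gt0.
Qed.

Lemma unbordered_density_ge0 a : 0 <= unbordered_density a.
Proof. by rewrite divr_ge0. Qed.

Lemma unbordered_density_le a : unbordered_density a <= K ^- a.
Proof.
rewrite /unbordered_density !natrX ler_pdivrMr ?exprn_gt0 ?K_gt0 //.
rewrite -addnn exprD mulrA mulVf ?K_expr_neq0 // mul1r -natrX ler_nat.
exact: n_unbordered_le.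
Qed.

Lemma unbordered_density_succ_le b : (0 < b)%N ->
  unbordered_density b.+1 <= K ^- b.+1 - K ^- b.+2.
Proof.
move=> b_gt0; rewrite /unbordered_density.
have -> : K ^- b.+1 - K ^- b.+2 = (K - 1) * K ^+ b / (k ^ (b.+1).*2)%:R.
  rewrite natrX (_ : (b.+1).*2 = b.+2 + b)%N; last lia.
  rewrite exprD !exprS; field.
  by rewrite K_expr_neq0 gt_eqF ?K_gt0.
rewrite ler_wpM2r ?invr_ge0 // -natrX -[K - 1](natrB _ (ltnW k_gt1)) -natrM.
rewrite ler_nat subn1.
exact: n_unbordered_succ_le.
Qed.

Lemma unbordered_density_sum_le M : \sum_(1 <= a < M) unbordered_density a <= 3 / 4.
Proof.
case: (leqP M 1) => [le_M | lt_M]; first by rewrite big_geq //; lra.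
rewrite big_ltn //.
have tail : \sum_(2 <= a < M) unbordered_density a <= K ^- 2 - K ^- M.
  rewrite (_ : K ^- 2 - K ^- M = \sum_(2 <= a < M) (- K ^- a.+1 - - K ^- a)); last first.
    by rewrite telescope_sumr // opprK addrC.
  rewrite !big_nat; apply: ler_sum => -[|[|b]] // _.
  by rewrite opprK addrC; apply: unbordered_density_succ_le.
have := unbordered_density_le 1; have := invK_expr_le 1; have := invK_expr_le 2.
have : 0 <= K ^- M by rewrite invr_ge0 exprn_ge0 // ltW ?K_gt0.
rewrite !expr1 expr2 invfM; lra.
Qed.

Lemma mean_width0 : mean_width 0 = 0.
Proof. by rewrite /mean_width /total_width big_seq1 mul0r. Qed.

Lemma mean_width_rec n : (0 < n)%N -> mean_width n =
  1 + \sum_(1 <= a < n./2.+1) unbordered_density a * (1 + mean_width (n - a.*2)).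
Proof.
move=> n_gt0; rewrite /mean_width total_width_rec // natrD mulrDl !natrX.
rewrite divff ?K_expr_neq0 //.
congr (_ + _); rewrite natr_sum mulr_suml; apply: eq_big_nat => a /andP[a_gt0 a_le].
set m := (n - a.*2)%N; rewrite natrM natrD /unbordered_density !natrX.
rewrite (_ : K ^+ n = K ^+ a.*2 * K ^+ m); last by rewrite -exprD /m subnKC //; lia.
by field; rewrite !K_expr_neq0.
Qed.

Lemma mean_width_cvg : cvgn mean_width.
Proof.
apply: renewal_cvg mean_width0 mean_width_rec.
- exact: unbordered_density_ge0.
- by move=> a; apply: le_trans (unbordered_density_le a) (invK_expr_le a).
- exact: unbordered_density_sum_le.
Qed.

End MeanWidth.

Lemma perm_tuple_words k n : perm_eq (map val (enum {: n.-tuple 'I_k})) (words k n).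
Proof.
apply: uniq_perm; first by rewrite map_inj_uniq ?enum_uniq //; exact: val_inj.
  exact: words_uniq.
move=> s; rewrite mem_words; apply/mapP/idP => [[t _ ->] | s_n].
  by rewrite size_tuple.
by exists (Tuple s_n); rewrite ?mem_enum.
Qed.

Lemma IB_count k n i : IB k n i = count (fun w => greedy_width w == i) (words k n).
Proof.
rewrite /IB cardsE cardE /enum_mem size_filter.
rewrite -(permP (perm_tuple_words k n)) [in RHS]count_map [in RHS]enumT.
by apply: eq_count => t; rewrite inE /=; apply/asboolP/eqP => /largest_BP_widthE.
Qed.

Lemma sum_width_IB k n : (\sum_(1 <= i < n.+1) i * IB k n i)%N = total_width k n.
Proof.
rewrite /total_width; under eq_bigr do rewrite IB_count -sum_count big_distrr /=.
rewrite exchange_big /= big_seq [RHS]big_seq; apply: eq_bigr => w.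
rewrite mem_words => /eqP size_w; have := greedy_width_le_size w; rewrite size_w.
case: (posnP (greedy_width w)) => [-> _ | gw_gt0 gw_le].
  by rewrite big1 // => -[|i] _ /=; rewrite ?mul0n ?muln0.
have gw_in : greedy_width w \in index_iota 1 n.+1 by rewrite mem_index_iota; lia.
rewrite (bigD1_seq (greedy_width w)) ?iota_uniq //= eqxx muln1.
by rewrite big1 ?addn0 // => i /negbTE; rewrite eq_sym => ->; rewrite muln0.
Qed.

Lemma E_nk_mean_width (R : realType) k n : E_nk (R:=R) k n = mean_width R k n.
Proof.
rewrite /E_nk /mean_width -sum_width_IB natr_sum mulrC; congr (_ * _).
by apply: eq_bigr => i _; rewrite natrM.
Qed.

Local Open Scope classical_set_scope.

Theorem theorem4 (R : realType) (k : nat) (hk : (2 <= k)%N) :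
  exists l : R, (fun n : nat => E_nk (R:=R) k n) @ \oo --> l.
Proof.
apply/cvg_ex; rewrite (_ : (fun n => E_nk k n) = mean_width R k).
  exact: mean_width_cvg.
by apply/funext => n; rewrite E_nk_mean_width.
Qed.
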